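(* Suppose an SCF $f:\Theta\to Z$ is mixed-Nash-implemented by a mechanism $\mathcal M=\langle M,g\rangle$. Let $(i,\theta)\in\mathcal I\times\Theta$ and $\lambda\in MNE^{(\mathcal M,\theta)}$. If $f(\theta)\in\arg\min_{z\in Z}u_i^\theta(z)$ and $\mathcal L_i^Z(f(\theta),\theta)$ is an $i$-max set, then $$\bigcup_{m_i\in M_i}\mathrm{SUPP}\big[g(m_i,\lambda_{-i})\big]=\{f(\theta)\}.$$
   Context: Standing setup: $\mathcal I=\{1,\dots,I\}$ is a finite set of agents with $I\ge 3$; $\Theta$ is a finite or countably infinite set of states; $Z$ is a finite set of pure outcomes; $Y=\Delta(Z)$ is the set of lotteries on $Z$, and each $z\in Z$ is identified with the degenerate lottery at $z$. For each $(i,\theta)$, $u_i^\theta:Z\to\mathbb R$ is a Bernoulli utility and $U_i^\theta(y)=\sum_{z\in Z}y_z u_i^\theta(z)$ for $y\in Y$. For $\alpha\in Y$: $\mathcal L_i^Y(\alpha,\theta)=\{y\in Y:U_i^\theta(\alpha)\ge U_i^\theta(y)\}$ and $\mathcal L_i^Z(\alpha,\theta)=\{z\in Z:U_i^\theta(\alpha)\ge u_i^\theta(z)\}$. $\mathrm{SUPP}[\mu]$ is the support of a probability $\mu$. A mechanism is $\mathcal M=\langle M=\times_{i}M_i,\ g:M\to Y\rangle$ with each $M_i$ countable; for a profile of mixed strategies $\lambda=(\lambda_i)_i\in\times_i\Delta(M_i)$ (or a mixture of pure and mixed strategies, e.g. $(m_i,\lambda_{-i})$), $g(\lambda)$ denotes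 the induced lottery on $Z$. $PNE^{(\mathcal M,\theta)}$ and $MNE^{(\mathcal M,\theta)}$ are the sets of pure- and mixed-strategy Nash equilibria of $\mathcal M$ at $\theta$ (agents maximize $U_i^\theta$ of the induced lottery). An SCF $f:\Theta\to Z$ is mixed-Nash-implemented by $\mathcal M$ if $\bigcup_{\lambda\in MNE^{(\mathcal M,\theta)}}\mathrm{SUPP}(g[\lambda])=\{f(\theta)\}$ for all $\theta\in\Theta$. For $(i,\theta)$, a nonempty $E\subseteq Z$ is an $i$-$\theta$-max set if $E\subseteq\arg\max_{z\in E}u_i^\theta(z)$ and $E\subseteq\arg\max_{z\in Z}u_j^\theta(z)$ for all $j\ne i$; $E$ is an $i$-max set if it is an $i$-$\theta$-max set for some $\theta\in\Theta$. *)

From HB Require Import structures.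
From mathcomp Require Import all_boot all_order all_algebra.
From mathcomp Require Import classical_sets reals constructive_ereal ereal esum.
Set Implicit Arguments. Unset Strict Implicit. Unset Printing Implicit Defensive.
Import Order.TTheory GRing.Theory Num.Theory.
Local Open Scope ring_scope.

Section Defs.
Variables (R : realType) (Z : finType).

Definition is_lottery (y : Z -> R) : Prop :=
  (forall z, 0 <= y z) /\ \sum_(z : Z) y z = 1.

Definition EU (u : Z -> R) (y : Z -> R) : R := \sum_(z : Z) y z * u z.

Definition SUPP (y : Z -> R) : set Z := [set z | 0 < y z].

Variables (n : nat) (M : 'I_n -> countType).

Definition profile := {dffun forall i : 'I_n, M i}.

Definition is_mechanism (g : profile -> Z -> R) : Prop :=
  forall m, is_lottery (g m).

Definition is_mixed (i : 'I_n) (p : M i -> R) : Prop :=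
  (forall x, 0 <= p x) /\ (\esum_(x in [set: M i]) (p x)%:E = 1)%E.

Definition mixed_profile := forall i : 'I_n, M i -> R.

Definition is_mixed_profile (lam : mixed_profile) : Prop :=
  forall i, is_mixed (lam i).

Definition dirac (i : 'I_n) (x : M i) : M i -> R :=
  fun y => if y == x then 1 else 0.

Definition deviate (lam : mixed_profile) (i : 'I_n) (p : M i -> R) : mixed_profile :=
  dfwith lam p.

Definition induced (g : profile -> Z -> R) (lam : mixed_profile) : Z -> R :=
  fun z => fine (\esum_(m in [set: profile])
                   ((\prod_(j < n) lam j (m j)) * g m z)%:E).

Variable (Theta : countType).
Variable (u : 'I_n -> Theta -> Z -> R).

Definition MNE (g : profile -> Z -> R) (th : Theta) (lam : mixed_profile) : Prop :=
  is_mixed_profile lam /\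
  forall (i : 'I_n) (p : M i -> R), is_mixed p ->
    EU (u i th) (induced g (deviate lam p)) <= EU (u i th) (induced g lam).

Definition mixed_Nash_implements (g : profile -> Z -> R) (f : Theta -> Z) : Prop :=
  forall th z,
    (exists lam, MNE g th lam /\ SUPP (induced g lam) z) <-> z = f th.

End Defs.

Section MaxSets.
Variables (R : realType) (Z : finType) (n : nat) (Theta : Type).
Variable (u : 'I_n -> Theta -> Z -> R).

Definition is_i_th_max_set (i : 'I_n) (th : Theta) (E : set Z) : Prop :=
  (exists z, E z) /\
  (forall z, E z -> forall z', E z' -> u i th z' <= u i th z) /\
  (forall j, j != i -> forall z, E z -> forall z', u j th z' <= u j th z).

Definition is_i_max_set (i : 'I_n) (E : set Z) : Prop :=
  exists th, is_i_th_max_set i th E.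

(* L_i^Z(alpha, th) for a degenerate lottery alpha = a. *)
Definition LZ (i : 'I_n) (a : Z) (th : Theta) : set Z :=
  [set z | u i th z <= u i th a].
End MaxSets.

From HB Require Import structures.
From mathcomp Require Import all_boot all_order all_algebra.
From mathcomp Require Import classical_sets reals constructive_ereal ereal esum.
From mathcomp Require Import boolp fsbigop.

Import Order.TTheory GRing.Theory Num.Theory.
Local Open Scope ring_scope.
Local Open Scope classical_set_scope.

(* Since f(th) is the worst outcome for i and lam is an equilibrium at th with
   outcome f(th), every unilateral deviation of i from lam yields outcomes in
   L = L_i^Z(f(th), th).  At a state th' where L is an i-th'-max set, agent i is
   indifferent between the outcomes of L while every other agent gets a best
   outcome there, so each (p, lam_{-i}) is an equilibrium at th'.  Implementation
   at th' forces their outcomes to be f(th'), and lam = (lam_i, lam_{-i}) itself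
   shows that f(th') = f(th). *)

Lemma esumZl (R : realType) (T : choiceType) (I : set T) (a : T -> \bar R) (c : R) :
  0 <= c -> (forall i, (0 <= a i)%E) ->
  \esum_(i in I) (c%:E * a i)%E = (c%:E * \esum_(i in I) a i)%E.
Proof.
move=> c0 a0; rewrite /esum -ereal_supZl //; last first.
  by apply/set0P; exists 0%E; exists set0; [exact: fsets_set0|rewrite fsbig_set0].
rewrite image_comp; congr ereal_sup; apply: eq_imagel => A _ /=.
by rewrite ge0_mule_fsumr.
Qed.

Section ProductWeight.
Context {R : realType} {n : nat} {M : 'I_n -> countType}.
Implicit Types (L : mixed_profile R M) (d m : profile M) (S : {set 'I_n}).

Definition agree_off d S : set (profile M) :=
  [set m | forall j, j \notin S -> m j = d j].

Definition weight L S m : R := \prod_(j in S) L j (m j).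

Definition update m k (x : M k) : profile M := finfun (dfwith (fun j => m j) x).
Arguments update m {k} x.

Lemma update_in m k (x : M k) : update m x k = x.
Proof. by rewrite /update ffunE dfwith_in. Qed.

Lemma update_out m k (x : M k) j : k != j -> update m x j = m j.
Proof. by move=> kj; rewrite /update ffunE dfwith_out. Qed.

Arguments update_in m {k} x.
Arguments update_out m {k} x {j}.

Lemma mixed_inhabited {i} {p : M i -> R} : is_mixed p -> inhabited (M i).
Proof.
move=> [_ p1]; have [//|N] := pselect (inhabited (M i)).
have M0 : [set: M i] = set0 by apply/seteqP; split => x // _; apply: N.
by move: p1; rewrite M0 esum_set0 => -[] /esym/eqP; rewrite oner_eq0.
Qed.

Section Mixed.
Context {L : mixed_profile R M} (HL : is_mixed_profile L).

Let L_ge0 j x : 0 <= L j x.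
Proof. by case: (HL j) => + _; apply. Qed.

Lemma weight_ge0 S m : 0 <= weight L S m.
Proof. by apply: prodr_ge0. Qed.

(* A profile agreeing with d off k |: S is a pair (message of k, profile
   agreeing with d off S); the sum then factors as a double sum. *)
Lemma esum_weight_setU1 d S k : k \notin S ->
  \esum_(m in agree_off d (k |: S)) (weight L (k |: S) m)%:E =
  \esum_(x in [set: M k]) ((L k x)%:E * \esum_(m in agree_off d S) (weight L S m)%:E)%E.
Proof.
move=> kS.
have -> : agree_off d (k |: S) =
    (fun p : M k * profile M => update p.2 p.1) @` ([set: M k] `*`` fun=> agree_off d S).
  apply/seteqP; split => m.
    move=> Hm; exists (m k, update m (d k)).
      split => //= j jS; have [<-|kj] := eqVneq k j; first by rewrite update_in.
      by rewrite update_out // Hm // in_setU1 negb_or eq_sym kj.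
    apply/ffunP => j /=; have [<-|kj] := eqVneq k j; first by rewrite update_in.
    by rewrite !update_out.
  move=> [[x m'] [_ /= Hm'] <-] j; rewrite in_setU1 negb_or => /andP[kj jS].
  by rewrite update_out 1?eq_sym // Hm'.
rewrite esum_image; last first.
  move=> [x1 m1] [x2 m2]; rewrite !inE => -[_ /= H1] [_ /= H2] /= E.
  have ex : x1 = x2 by rewrite -(update_in m1 x1) -(update_in m2 x2) E.
  subst x2; congr pair; apply/ffunP => j.
  have [<-|kj] := eqVneq k j; first by rewrite H1 // H2.
  by rewrite -(update_out m1 x1 kj) -(update_out m2 x1 kj) E.
rewrite -(@esum_esum _ _ _ setT (fun=> agree_off d S)
  (fun (x : M k) m => (weight L (k |: S) (update m x))%:E)); last first.
  by move=> x m _ _; rewrite lee_fin weight_ge0.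
apply: eq_esum => x _.
rewrite -esumZl ?lee_fin //; last by move=> m; rewrite lee_fin weight_ge0.
apply: eq_esum => m _.
rewrite -EFinM /weight big_setU1 //= update_in; congr (_ * _)%:E.
by apply: eq_bigr => j jS; rewrite update_out //; apply: contraNneq kS => ->.
Qed.

Lemma esum_weight_seq d (s : seq 'I_n) :
  \esum_(m in agree_off d [set:: s]%SET) (weight L [set:: s]%SET m)%:E = 1%E.
Proof.
elim: s => [|k s IH].
  rewrite (_ : agree_off d _ = [set d]); last first.
    apply/seteqP; split => m /=; last by move=> -> j.
    by move=> Hm; apply/ffunP => j; apply: Hm; rewrite inE.
  by rewrite esum_set1 ?lee_fin ?weight_ge0 // /weight big1 // => j; rewrite inE.
rewrite finset.set_cons; have [ks|kS] := boolP (k \in [set:: s]%SET).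
  by rewrite (finset.setUidPr _) // finset.sub1set.
rewrite esum_weight_setU1 // IH (eq_esum (b := fun x => (L k x)%:E)).
  by case: (HL k).
by move=> x _; rewrite mule1.
Qed.

Lemma esum_weight_profile :
  \esum_(m in [set: profile M]) (\prod_(j < n) L j (m j))%:E = 1%E.
Proof.
have inhM j : exists x : M j, true.
  by have [x] := mixed_inhabited (HL j); exists x.
pose d : profile M := finfun (fun j => xchoose (inhM j)).
have SallE : [set:: enum 'I_n]%SET = [set: 'I_n]%SET by apply/setP => j; rewrite !inE mem_enum.
rewrite -(esum_weight_seq d (enum 'I_n)) SallE.
rewrite (_ : agree_off d _ = setT); last first.
  by apply/seteqP; split => m // _ j; rewrite inE.
by apply: eq_esum => m _; rewrite /weight; congr (_)%:E; apply: eq_bigl => j; rewrite inE.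
Qed.

End Mixed.
End ProductWeight.

Section InducedLottery.
Context {R : realType} {Z : finType} {n : nat} {M : 'I_n -> countType}.
Context {g : profile M -> Z -> R} (Hg : is_mechanism g).

Lemma mechanism_ge0 m z : 0 <= g m z.
Proof. by case: (Hg m) => + _; apply. Qed.

Lemma mechanism_le1 m z : g m z <= 1.
Proof.
case: (Hg m) => g0 <-; rewrite (bigD1 z) //= lerDl.
by apply: sumr_ge0 => ? _; apply: g0.
Qed.

Context {L : mixed_profile R M} (HL : is_mixed_profile L).

Let w_ge0 (m : profile M) : 0 <= \prod_(j < n) L j (m j).
Proof. by apply: prodr_ge0 => j _; case: (HL j) => + _; apply. Qed.

Let term_ge0 (m : profile M) z : (0 <= ((\prod_(j < n) L j (m j)) * g m z)%:E)%E.
Proof. by rewrite lee_fin mulr_ge0 ?mechanism_ge0. Qed.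

Let esum_induced_fin z :
  \esum_(m in [set: profile M]) ((\prod_(j < n) L j (m j)) * g m z)%:E \is a fin_num.
Proof.
rewrite ge0_fin_numE ?esum_ge0 // (@le_lt_trans _ _ 1%E) ?ltry //.
rewrite -(esum_weight_profile HL); apply: le_esum => m _.
by rewrite lee_fin ler_piMr ?mechanism_le1.
Qed.

Lemma induced_lottery : is_lottery (induced g L).
Proof.
split=> [z|]; first exact/fine_ge0/esum_ge0.
rewrite /induced sum_fine // -esum_sum; last by move=> m z _ _.
rewrite [RHS](_ : 1 = fine (1%E : \bar R)) // -(esum_weight_profile HL); congr fine.
apply: eq_esum => m _; rewrite sumEFin -mulr_sumr.
by case: (Hg m) => _ ->; rewrite mulr1.
Qed.

End InducedLottery.

Section ExpectedUtility.
Context {R : realType} {Z : finType}.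
Implicit Types (v : Z -> R) (y : Z -> R) (c : R).

Lemma lottery_supp_nonempty {y} : is_lottery y -> exists z, SUPP y z.
Proof.
move=> [y0 y1]; apply/not_existsP => N; move: y1.
rewrite big1 => [/eqP|z _]; first by rewrite eq_sym oner_eq0.
by apply/eqP; rewrite eq_le y0 andbT leNgt; apply/negP; apply: N.
Qed.

Lemma EU_supp_const {v y c} : is_lottery y -> (forall z, SUPP y z -> v z = c) ->
  EU v y = c.
Proof.
move=> [y0 y1] Hc; rewrite /EU (eq_bigr (fun z => y z * c)).
  by rewrite -mulr_suml y1 mul1r.
move=> z _; have := y0 z; rewrite le_eqVlt => /orP[/eqP <-|yz].
  by rewrite !mul0r.
by rewrite Hc.
Qed.

Lemma EU_le_bound {v y c} : is_lottery y -> (forall z, v z <= c) -> EU v y <= c.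
Proof.
move=> [y0 y1] Hc; apply: (@le_trans _ _ (\sum_z y z * c)).
  by apply: ler_sum => z _; apply: ler_wpM2l.
by rewrite -mulr_suml y1 mul1r.
Qed.

(* EU v y - c is then a vanishing sum of the nonnegative terms y z * (v z - c). *)
Lemma EU_le_lower_bound_supp {v y c} : is_lottery y -> (forall z, c <= v z) ->
  EU v y <= c -> forall z, SUPP y z -> v z = c.
Proof.
move=> [y0 y1] Hc EUc z yz.
have sumE : \sum_z y z * (v z - c) = EU v y - c.
  rewrite /EU (eq_bigr (fun z => y z * v z - y z * c)); last by move=> ? _; rewrite mulrBr.
  by rewrite sumrB -mulr_suml y1 mul1r.
have term_ge0 z' : true -> 0 <= y z' * (v z' - c) by rewrite mulr_ge0 ?subr_ge0.
have sum0 : \sum_z y z * (v z - c) = 0.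
  by apply/eqP; rewrite eq_le sumr_ge0 // andbT sumE subr_le0.
move: (psumr_eq0P term_ge0 sum0 (i := z) isT) => /eqP.
by rewrite mulf_eq0 (gt_eqF yz) subr_eq0 => /eqP.
Qed.

End ExpectedUtility.

Section Deviate.
Context {R : realType} {n : nat} {M : 'I_n -> countType}.
Implicit Types (L : mixed_profile R M).

Lemma deviate_in L i (p : M i -> R) : @deviate _ _ _ L i p i = p.
Proof. exact: dfwith_in. Qed.

Lemma deviate_out L i (p : M i -> R) j : i != j -> @deviate _ _ _ L i p j = L j.
Proof. exact: dfwith_out. Qed.

Lemma deviateK L i (p q : M i -> R) : deviate (deviate L p) q = deviate L q.
Proof.
apply: functional_extensionality_dep => j.
by have [<-|ij] := eqVneq i j; rewrite ?deviate_in ?deviate_out.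
Qed.

Lemma deviate_id L i : deviate L (L i) = L.
Proof.
apply: functional_extensionality_dep => j.
by have [<-|ij] := eqVneq i j; rewrite ?deviate_in ?deviate_out.
Qed.

Lemma deviate_mixed {L i} {p : M i -> R} :
  is_mixed_profile L -> is_mixed p -> is_mixed_profile (deviate L p).
Proof.
move=> HL Hp j.
by have [<-|ij] := eqVneq i j; rewrite ?deviate_in ?deviate_out.
Qed.

Lemma dirac_mixed {i} (x : M i) : is_mixed (dirac R x).
Proof.
have dirac_ge0 y : 0 <= dirac R x y by rewrite /dirac; case: eqP.
split=> //; rewrite (esumID [set x]); last by move=> y _; rewrite lee_fin.
rewrite setTI esum_set1 ?lee_fin // esum1 ?adde0; first by rewrite /dirac eqxx.
by move=> y [_ /= yx]; rewrite /dirac; case: eqP.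
Qed.

End Deviate.

Section Equilibrium.
Context {R : realType} {Z : finType} {n : nat} {M : 'I_n -> countType}.
Context {Theta : countType} {u : 'I_n -> Theta -> Z -> R}.
Context {g : profile M -> Z -> R} {f : Theta -> Z} (Hg : is_mechanism g).
Implicit Types (lam : mixed_profile R M) (th : Theta).

Lemma implements_MNE_supp {th lam z} : mixed_Nash_implements u g f ->
  MNE u g th lam -> SUPP (induced g lam) z -> z = f th.
Proof. by move=> Hf Hlam Hz; apply/(Hf th z).1; exists lam. Qed.

Lemma deviation_supp_LZ {i th lam} : mixed_Nash_implements u g f ->
  MNE u g th lam -> (forall z, u i th (f th) <= u i th z) ->
  forall p : M i -> R, is_mixed p -> forall z,
    SUPP (induced g (deviate lam p)) z -> LZ u i (f th) th z.
Proof.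
move=> Hf Hlam Hmin p Hp z Hz.
have EU_lam : EU (u i th) (induced g lam) = u i th (f th).
  apply: EU_supp_const (induced_lottery Hg Hlam.1) _ => z' Hz'.
  by have -> : z' = f th by apply/(Hf th z').1; exists lam.
have := Hlam.2 i p Hp; rewrite EU_lam => EU_dev.
have := induced_lottery Hg (deviate_mixed Hlam.1 Hp).
by move/EU_le_lower_bound_supp => /(_ _ _ Hmin EU_dev z Hz); rewrite /LZ /= => ->.
Qed.

Lemma max_set_deviations_MNE {i th' lam} {E : set Z} :
  is_mixed_profile lam -> is_i_th_max_set u i th' E ->
  (forall p : M i -> R, is_mixed p ->
     forall z, SUPP (induced g (deviate lam p)) z -> E z) ->
  forall p : M i -> R, is_mixed p -> MNE u g th' (deviate lam p).
Proof.
move=> Hlam [[e0 Ee0] [Emax_i Emax_j]] suppE p Hp.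
have EU_dev k (q : M i -> R) : is_mixed q ->
    EU (u k th') (induced g (deviate lam q)) = u k th' e0.
  move=> Hq; apply: EU_supp_const (induced_lottery Hg (deviate_mixed Hlam Hq)) _.
  move=> z /(suppE q Hq) Ez.
  apply/eqP; rewrite eq_le.
  by have [->|ki] := eqVneq k i; [rewrite !Emax_i | rewrite !Emax_j].
split=> [|k q Hq]; first exact: deviate_mixed.
have [eki|ki] := eqVneq k i; first by subst k; rewrite deviateK !EU_dev.
rewrite EU_dev //; apply: EU_le_bound (Emax_j k ki e0 Ee0).
exact: (induced_lottery Hg (deviate_mixed (deviate_mixed Hlam Hp) Hq)).
Qed.

End Equilibrium.

Theorem lemma1 (R : realType) (n : nat) (Z : finType) (Theta : countType)
    (u : 'I_n -> Theta -> Z -> R) (M : 'I_n -> countType)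
    (g : profile M -> Z -> R) (f : Theta -> Z)
    (i : 'I_n) (th : Theta) (lam : mixed_profile R M) :
  (3 <= n)%N ->
  is_mechanism g ->
  mixed_Nash_implements u g f ->
  MNE u g th lam ->
  (forall z, u i th (f th) <= u i th z) ->
  is_i_max_set u i (LZ u i (f th) th) ->
  forall z,
    (exists mi : M i, SUPP (induced g (deviate lam (@dirac R n M i mi))) z) <-> z = f th.
Proof.
move=> _ Hg Hf Hlam Hmin [th' Hmax] z.
have dev_MNE := max_set_deviations_MNE Hg Hlam.1 Hmax
  (deviation_supp_LZ Hg Hf Hlam Hmin).
have f_th' : f th' = f th.
  have := dev_MNE _ (Hlam.1 i); rewrite deviate_id => Hlam'.
  have [z1 Hz1] := lottery_supp_nonempty (induced_lottery Hg Hlam.1).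
  by rewrite -(implements_MNE_supp Hf Hlam' Hz1) (implements_MNE_supp Hf Hlam Hz1).
have dirac_MNE (mi : M i) := dev_MNE _ (dirac_mixed mi).
split=> [[mi Hz]|->]; first by rewrite -f_th'; exact: implements_MNE_supp Hf (dirac_MNE mi) Hz.
have [mi] := mixed_inhabited (Hlam.1 i).
have [z1 Hz1] := lottery_supp_nonempty (induced_lottery Hg (dirac_MNE mi).1).
by exists mi; rewrite -f_th' -(implements_MNE_supp Hf (dirac_MNE mi) Hz1).
Qed.
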